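(* Let $(\dot I_0,\dot d_0,\dot z_1,\dot z_2,\dot z_3)\in\mathbb C^5$ and $a,b,F\in\mathbb C$ with $F\ne0$. Then every nonzero $\mathcal L$-submodule $M$ of $V(\dot I_0,\dot d_0,\dot z_1,\dot z_2,\dot z_3)\otimes A(a,b;F)$ contains $\bar w\otimes x^k$ for some $k\in\mathbb Z$, where $\bar w$ is a highest weight vector of $V(\dot I_0,\dot d_0,\dot z_1,\dot z_2,\dot z_3)$.
   Context: $\mathcal{L}$ has basis $\{d_n,I_n,z_1,z_2,z_3\mid n\in\mathbb{Z}\}$ with brackets $[d_n,d_m]=(m-n)d_{m+n}+\delta_{n,-m}\frac{n^3-n}{12}z_1$, $[d_n,I_m]=mI_{m+n}+\delta_{n,-m}(n^2+n)z_2$, $[I_n,I_m]=n\delta_{n,-m}z_3$, $z_i$ central. $V(\dot I_0,\dot d_0,\dot z_1,\dot z_2,\dot z_3)$ is the simple quotient of the Verma module $U(\mathcal L)/\mathcal I$, where $\mathcal I$ is the left ideal generated by $d_n,I_n$ ($n\in\mathbb N$), $d_0-\dot d_0$, $I_0-\dot I_0$, $z_i-\dot z_i$; $\bar w$ is the image of $1+\mathcal I$. $A(a,b;F)=\mathbb{C}[x,x^{-1}]$ with $z_1=z_2=z_3=0$, $d_nx^m=(a+m+nb)x^{m+n}$, $I_nx^m=Fx^{m+n}$. *)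

From HB Require Import structures.
From mathcomp Require Import all_boot all_order all_algebra.
From mathcomp Require Import complex.
From mathcomp Require Import reals.
Set Implicit Arguments. Unset Strict Implicit. Unset Printing Implicit Defensive.
Import Order.TTheory GRing.Theory Num.Theory.
Local Open Scope ring_scope.

Section TwistedHV.
Variables (K : fieldType) (V : lmodType K).

(* A representation of the twisted Heisenberg-Virasoro algebra L on V:
   dd n, II n, z1, z2, z3 are the actions of d_n, I_n, z_1, z_2, z_3. *)
Definition lin (f : V -> V) : Prop :=
  forall (c : K) (u v : V), f (c *: u + v) = c *: f u + f v.

Definition is_Lmod (dd II : int -> V -> V) (z1 z2 z3 : V -> V) : Prop :=
  [/\ (forall n, lin (dd n)), (forall n, lin (II n)), lin z1, lin z2 & lin z3] /\
  [/\
      (forall (n m : int) v, dd n (dd m v) - dd m (dd n v) =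
         (m - n)%:~R *: dd (m + n) v +
         (if n == - m then ((n ^+ 3 - n)%:~R / 12%:R) *: z1 v else 0)),
      (forall (n m : int) v, dd n (II m v) - II m (dd n v) =
         m%:~R *: II (m + n) v +
         (if n == - m then (n ^+ 2 + n)%:~R *: z2 v else 0)),
      (forall (n m : int) v, II n (II m v) - II m (II n v) =
         (if n == - m then n%:~R *: z3 v else 0)) &
      (forall z, z = z1 \/ z = z2 \/ z = z3 ->
         [/\ forall n v, z (dd n v) = dd n (z v),
             forall n v, z (II n v) = II n (z v),
             forall v, z (z1 v) = z1 (z v),
             forall v, z (z2 v) = z2 (z v) &
             forall v, z (z3 v) = z3 (z v)])].

Definition is_Lsubmod (dd II : int -> V -> V) (z1 z2 z3 : V -> V)
    (S : V -> Prop) : Prop :=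
  [/\ S 0, (forall u v, S u -> S v -> S (u + v)),
      (forall (c : K) u, S u -> S (c *: u)),
      (forall n u, S u -> S (dd n u) /\ S (II n u)) &
      (forall u, S u -> [/\ S (z1 u), S (z2 u) & S (z3 u)])].

Definition Lsimple (dd II : int -> V -> V) (z1 z2 z3 : V -> V) : Prop :=
  (exists v : V, v <> 0) /\
  forall S, is_Lsubmod dd II z1 z2 z3 S ->
    (forall v, S v -> v = 0) \/ (forall v, S v).

Definition is_hw_vector (dd II : int -> V -> V) (z1 z2 z3 : V -> V) (w : V)
    (I0 d0 zd1 zd2 zd3 : K) : Prop :=
  [/\ w <> 0,
      (forall n : int, 0 < n -> dd n w = 0 /\ II n w = 0),
      dd 0 w = d0 *: w /\ II 0 w = I0 *: w &
      [/\ z1 w = zd1 *: w, z2 w = zd2 *: w & z3 w = zd3 *: w]].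

(* The tensor product V (x) A(a,b;F), A = K[x,x^-1], is modelled as the
   finitely supported functions f : int -> V, f <-> sum_k f k (x) x^k. *)
Definition finsupp (f : int -> V) : Prop :=
  exists s : seq int, forall k, k \notin s -> f k = 0.

(* action of d_n : d_n (v (x) x^m) = d_n v (x) x^m + (a+m+nb) v (x) x^{m+n} *)
Definition tD (dd : int -> V -> V) (a b : K) (n : int) (f : int -> V) : int -> V :=
  fun k => dd n (f k) + (a + (k - n)%:~R + n%:~R * b) *: f (k - n).

(* action of I_n : I_n (v (x) x^m) = I_n v (x) x^m + F v (x) x^{m+n} *)
Definition tI (II : int -> V -> V) (F : K) (n : int) (f : int -> V) : int -> V :=
  fun k => II n (f k) + F *: f (k - n).

(* action of a central z (acting by 0 on A) *)
Definition tZ (z : V -> V) (f : int -> V) : int -> V := fun k => z (f k).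

Definition is_tensor_submod (dd II : int -> V -> V) (z1 z2 z3 : V -> V)
    (a b F : K) (M : (int -> V) -> Prop) : Prop :=
  [/\ (forall f, M f -> finsupp f),
      M (fun _ => 0),
      (forall f g, M f -> M g -> M (fun k => f k + g k)),
      (forall (c : K) f, M f -> M (fun k => c *: f k)) &
      (forall f, M f ->
         [/\ forall n, M (tD dd a b n f), forall n, M (tI II F n f),
             M (tZ z1 f), M (tZ z2 f) & M (tZ z3 f)])].

Definition pure (v : V) (k : int) : int -> V := fun j => if j == k then v else 0.

End TwistedHV.

From HB Require Import structures.
From mathcomp Require Import all_boot all_order all_algebra.
From mathcomp Require Import complex.
From mathcomp Require Import reals.
From mathcomp Require Import zify ring.
From Stdlib Require Import FunctionalExtensionality.
Set Implicit Arguments. Unset Strict Implicit. Unset Printing Implicit Defensive.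
Import Order.TTheory GRing.Theory Num.Theory.
Local Open Scope ring_scope.

(* Since V is simple and generated by a highest weight vector, every vector of
   V is killed by d_n and I_n for n >> 0.  Call a vector g of the tensor
   product "eventually in M" when g (x) x^n lies in M for all n >> 0.  Every
   element of M is eventually in M, because for n >> 0 the operator I_n acts
   on it as multiplication by F x^n.  The components of an element of M are
   killed by d_m, I_m for m >> 0, so d_m and I_m act on eventually-in-M
   elements through the A-factor alone; comparing such actions shows that the
   eventually-in-M elements are stable under the componentwise action of L and
   under multiplication of the k-th component by k.  The latter lets us kill
   all but one component k0 of a nonzero element of M; the vectors v with
   v (x) x^k0 eventually in M then form a nonzero submodule of V, hence
   contain the highest weight vector w. *)

Section LinearMaps.
Variables (K : fieldType) (V : lmodType K) (f : V -> V).
Hypothesis linf : lin f.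

Lemma lin0 : f 0 = 0.
Proof.
have := linf 1 0 0; rewrite !scale1r addr0 => E.
by apply: (addrI (f 0)); rewrite addr0 -E.
Qed.

Lemma linD u v : f (u + v) = f u + f v.
Proof. by have := linf 1 u v; rewrite !scale1r. Qed.

Lemma linZ c u : f (c *: u) = c *: f u.
Proof. by have := linf c u 0; rewrite addr0 lin0 addr0. Qed.

End LinearMaps.

Definition prod_sub (K : idomainType) (t : seq int) (k : int) : K :=
  \prod_(j <- t) (k - j)%:~R.

Lemma prod_sub_eq0 {K : idomainType} (t : seq int) k :
  k \in t -> prod_sub K t k = 0.
Proof. by move=> kt; rewrite /prod_sub (big_rem k kt) /= subrr mul0r. Qed.

Lemma prod_sub_neq0 {K : numDomainType} (t : seq int) k :
  k \notin t -> prod_sub K t k != 0.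
Proof.
move=> kt; rewrite prodf_seq_neq0; apply/allP => j jt /=.
by rewrite intr_eq0 subr_eq0; apply: contraNneq kt => ->.
Qed.

Lemma prod_sub_isolate (K : fieldType) (V : lmodType K) (f : int -> V) s k0 :
    (forall k, k \notin s -> f k = 0) ->
  let t := [seq j <- s | j != k0] in
  (fun k => prod_sub K t k *: f k) =1 pure (prod_sub K t k0 *: f k0) k0.
Proof.
move=> fs t k; rewrite /pure; case: eqP => [-> //|/eqP k_neq_k0].
have [ks|/fs->] := boolP (k \in s); last exact: scaler0.
by rewrite prod_sub_eq0 ?scale0r // mem_filter k_neq_k0.
Qed.

Section HeisenbergVirasoroModule.
Variables (K : fieldType) (V : lmodType K) (dd II : int -> V -> V).
Variables (z1 z2 z3 : V -> V).
Hypothesis HL : is_Lmod dd II z1 z2 z3.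

Let lin_dd n : lin (dd n). Proof. by case: HL => -[]. Qed.
Let lin_II n : lin (II n). Proof. by case: HL => -[]. Qed.
Let lin_z z : z = z1 \/ z = z2 \/ z = z3 -> lin z.
Proof. by case: HL => -[_ _ ? ? ?] _ [->|[->|->]]. Qed.
Let dd0 n : dd n 0 = 0 := lin0 (lin_dd n).
Let II0 n : II n 0 = 0 := lin0 (lin_II n).
Let bracket_dd := let: conj _ (And4 h _ _ _) := HL in h.
Let bracket_dI := let: conj _ (And4 _ h _ _) := HL in h.
Let bracket_II := let: conj _ (And4 _ _ h _) := HL in h.
Let central := let: conj _ (And4 _ _ _ h) := HL in h.

Definition eventually_killed (v : V) : Prop :=
  exists N : int, forall n, N <= n -> dd n v = 0 /\ II n v = 0.

Lemma eventually_killed_submod : is_Lsubmod dd II z1 z2 z3 eventually_killed.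
Proof.
split.
- by exists 0 => n _; rewrite dd0 II0.
- move=> u v [Nu Hu] [Nv Hv]; exists (`|Nu| + `|Nv|) => n Hn.
  have [du Iu] := Hu n ltac:(lia); have [dv Iv] := Hv n ltac:(lia).
  by rewrite !linD // du Iu dv Iv addr0.
- move=> c u [Nu Hu]; exists Nu => n /Hu[du Iu].
  by rewrite !linZ // du Iu scaler0.
- move=> m u [Nu Hu]; split; exists (`|Nu| + `|m| + 1) => n Hn;
    have [du Iu] := Hu n ltac:(lia); have [dmu Imu] := Hu (m + n) ltac:(lia);
    have nm : (n == - m) = false by apply/negbTE; lia.
  + split.
      by rewrite (canRL (subrK _) (bracket_dd n m u)) nm du dmu dd0 !scaler0 !addr0.
    have nm' : (m == - n) = false by apply/negbTE; lia.
    have := canRL (subrK _) (bracket_dI m n u).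
    by rewrite nm' Iu dd0 (addrC n m) Imu scaler0 !add0r => <-.
  + by rewrite (canRL (subrK _) (bracket_dI n m u))
      (canRL (subrK _) (bracket_II n m u)) nm du Imu Iu !II0 scaler0 !addr0.
- move=> u [Nu Hu].
  have killed_z z : z = z1 \/ z = z2 \/ z = z3 -> eventually_killed (z u).
    move=> hz; have [zd zI _ _ _] := central hz.
    by exists Nu => n /Hu[du Iu]; rewrite -zd -zI du Iu (lin0 (lin_z hz)).
  by split; apply: killed_z; tauto.
Qed.

Lemma hw_eventually_killed w I0 d0 zd1 zd2 zd3 :
  Lsimple dd II z1 z2 z3 -> is_hw_vector dd II z1 z2 z3 w I0 d0 zd1 zd2 zd3 ->
  forall v, eventually_killed v.
Proof.
move=> [_ simple] [w_neq0 w_hw _ _].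
case: (simple _ eventually_killed_submod) => [killed0|//].
by case: w_neq0; apply: killed0; exists 1 => n n_gt0; apply: w_hw; lia.
Qed.

Section TensorSubmodule.
Variables (a b F : K) (M : (int -> V) -> Prop).
Hypotheses (killed : forall v, eventually_killed v) (F_neq0 : F != 0).
Hypothesis HM : is_tensor_submod dd II z1 z2 z3 a b F M.

Let M_finsupp f : M f -> finsupp f.
Proof. by case: HM => fin _ _ _ _; apply: fin. Qed.
Let M_add f g : M f -> M g -> M (fun k => f k + g k).
Proof. by case: HM => _ _ add _ _; apply: add. Qed.
Let M_scale c f : M f -> M (fun k => c *: f k).
Proof. by case: HM => _ _ _ scale _; apply: scale. Qed.
Let M_tD n f : M f -> M (tD dd a b n f).
Proof. by move=> Mf; case: HM => _ _ _ _ /(_ f Mf)[MD _ _ _ _]; apply: MD. Qed.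
Let M_tI n f : M f -> M (tI II F n f).
Proof. by move=> Mf; case: HM => _ _ _ _ /(_ f Mf)[_ MI _ _ _]; apply: MI. Qed.

Lemma submod_ext f g : M f -> f =1 g -> M g.
Proof. by move=> Mf /functional_extensionality <-. Qed.

Definition uniformly_killed (g : int -> V) : Prop :=
  exists N : int, forall n, N <= n -> forall k, dd n (g k) = 0 /\ II n (g k) = 0.

Lemma finsupp_uniformly_killed g : finsupp g -> uniformly_killed g.
Proof.
move=> [s gs].
suff [N HN] : exists N : int, forall n, N <= n ->
    forall k, k \in s -> dd n (g k) = 0 /\ II n (g k) = 0.
  exists N => n Nn k; have [ks|ks] := boolP (k \in s); first exact: HN.
  by rewrite gs // dd0 II0.
elim: s {gs} => [|j s [N IH]]; first by exists 0.
have [Nj Hj] := killed (g j); exists (`|N| + `|Nj|) => n Nn k.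
by rewrite inE => /predU1P[->|ks]; [apply: Hj | apply: IH] => //; lia.
Qed.

Definition xshift (n : int) (g : int -> V) : int -> V := fun k => g (k - n).

Definition eventually_in (g : int -> V) : Prop :=
  exists N : int, forall n, N <= n -> M (xshift n g).

Lemma eventually_in_ext f g : eventually_in f -> f =1 g -> eventually_in g.
Proof.
by move=> [N HN] fg; exists N => n /HN Mf; apply: submod_ext Mf _ => k; apply: fg.
Qed.

Lemma eventually_in_uniformly_killed g : eventually_in g -> uniformly_killed g.
Proof.
move=> [N HN]; have [N' HN'] := finsupp_uniformly_killed (M_finsupp (HN N (lexx N))).
by exists N' => n /HN' killed_n k; have := killed_n (k + N); rewrite /xshift addrK.
Qed.

Lemma submod_eventually_in g : M g -> eventually_in g.
Proof.
move=> Mg; have [N HN] := finsupp_uniformly_killed (M_finsupp Mg).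
exists N => n Nn; apply: submod_ext (M_scale F^-1 (M_tI n Mg)) _ => k.
by rewrite /tI (HN n Nn k).2 add0r scalerA mulVf // scale1r.
Qed.

Lemma eventually_in_add f g :
  eventually_in f -> eventually_in g -> eventually_in (fun k => f k + g k).
Proof.
move=> [N1 H1] [N2 H2]; exists (`|N1| + `|N2|) => n Nn.
by apply: M_add; [apply: H1 | apply: H2]; lia.
Qed.

Lemma eventually_in_scale c g :
  eventually_in g -> eventually_in (fun k => c *: g k).
Proof. by move=> [N HN]; exists N => n /HN; apply: M_scale. Qed.

Lemma eventually_in_tZ z g : (forall f, M f -> M (tZ z f)) ->
  eventually_in g -> eventually_in (tZ z g).
Proof. by move=> Mz [N HN]; exists N => n /HN; apply: Mz. Qed.

Lemma eventually_in_II j g :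
  eventually_in g -> eventually_in (fun k => II j (g k)).
Proof.
move=> [N HN]; exists (`|N| + `|j|) => n Nn.
have Mshift_n := HN n ltac:(lia); have Mshift_nj := HN (n + j) ltac:(lia).
apply: submod_ext (M_add (M_tI j Mshift_n) (M_scale (- F) Mshift_nj)) _ => k.
rewrite /tI /xshift scaleNr; have -> : k - j - n = k - (n + j) by ring.
by rewrite addrK.
Qed.

(* Once d_m kills every component of g, d_m acts on g x^(n-m) only through
   the A-factor, with coefficient a + k - m + m b at position k; subtracting
   (a + n - m + m b) g x^n leaves (k - n) at position k. *)
Lemma eventually_in_index g :
  eventually_in g -> eventually_in (fun k => (k%:~R : K) *: g k).
Proof.
move=> gM; have [N HN] := gM; have [N0 H0] := eventually_in_uniformly_killed gM.
pose m : int := `|N0|%:Z.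
exists (`|N| + `|N0|) => n Nn.
have Mshift := M_tD m (HN (n - m) ltac:(lia)).
apply: submod_ext (M_add Mshift
  (M_scale (- (a + (n - m)%:~R + m%:~R * b)) (HN n ltac:(lia)))) _ => k.
rewrite /tD /xshift (H0 m ltac:(lia) _).1 add0r.
have -> : k - m - (n - m) = k - n by ring.
by rewrite -scalerDl; congr (_ *: _); rewrite !intrD !intrN; ring.
Qed.

(* d_j (g x^n) = (d_j g) x^n + (a + n + j b) g x^(n+j) + (k g) x^(n+j). *)
Lemma eventually_in_dd j g :
  eventually_in g -> eventually_in (fun k => dd j (g k)).
Proof.
move=> gM; have [N HN] := gM; have [N' HN'] := eventually_in_index gM.
exists (`|N| + `|N'| + `|j|) => n Nn.
have Mshift := M_tD j (HN n ltac:(lia)).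
have Mcorrection :=
  M_add (M_scale (- (a + n%:~R + j%:~R * b)) (HN (n + j) ltac:(lia)))
  (M_scale (-1) (HN' (n + j) ltac:(lia))).
apply: submod_ext (M_add Mshift Mcorrection) _ => k.
rewrite /tD /xshift -addrA -[RHS]addr0; congr (_ + _).
have -> : k - j - n = k - (n + j) by ring.
rewrite scalerA -!scalerDl -[RHS](scale0r (g (k - (n + j)))); congr (_ *: _).
by rewrite !intrD !intrN; ring.
Qed.

Lemma eventually_in_prod_sub t g :
  eventually_in g -> eventually_in (fun k => prod_sub K t k *: g k).
Proof.
move=> gM; elim: t => [|j t IH].
  by apply: eventually_in_ext gM _ => k; rewrite /prod_sub big_nil scale1r.
apply: eventually_in_ext (eventually_in_add (eventually_in_index IH)
  (eventually_in_scale (- j%:~R) IH)) _ => k.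
rewrite /prod_sub big_cons !scalerA -scalerDl; congr (_ *: _).
by rewrite intrD intrN; ring.
Qed.

Lemma eventually_in_pure_submod k :
  is_Lsubmod dd II z1 z2 z3 (fun v => eventually_in (pure v k)).
Proof.
have pure_in f v : f 0 = 0 -> eventually_in (fun j => f (pure v k j)) ->
    eventually_in (pure (f v) k).
  by move=> f0 fM; apply: eventually_in_ext fM _ => j; rewrite /pure; case: eqP.
have M_tZ z : z = z1 \/ z = z2 \/ z = z3 -> forall f, M f -> M (tZ z f).
  by case: HM => _ _ _ _ Mact [->|[->|->]] f /Mact[_ _ ? ? ?].
split.
- have M0 : M (fun=> 0) by case: HM.
  apply: eventually_in_ext (submod_eventually_in M0) _.
  by move=> j; rewrite /pure; case: eqP.
- move=> u v uM vM; apply: eventually_in_ext (eventually_in_add uM vM) _ => j.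
  by rewrite /pure; case: eqP; rewrite ?addr0.
- move=> c u uM; apply: pure_in (eventually_in_scale c uM); exact: scaler0.
- move=> n u uM; split; apply: pure_in; rewrite ?dd0 ?II0 //.
    exact: eventually_in_dd.
  exact: eventually_in_II.
- move=> u uM; split; apply: pure_in (eventually_in_tZ (M_tZ _ _) uM);
    rewrite ?(lin0 (lin_z _)) //; tauto.
Qed.

End TensorSubmodule.
End HeisenbergVirasoroModule.

Theorem lemma19 (R : realType) (I0 d0 zd1 zd2 zd3 a b F : R[i])
  (V : lmodType R[i]) (dd II : int -> V -> V) (z1 z2 z3 : V -> V) (w : V) :
  is_Lmod dd II z1 z2 z3 ->
  Lsimple dd II z1 z2 z3 ->
  is_hw_vector dd II z1 z2 z3 w I0 d0 zd1 zd2 zd3 ->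
  F != 0 ->
  forall M : (int -> V) -> Prop,
    is_tensor_submod dd II z1 z2 z3 a b F M ->
    (exists f, M f /\ f <> (fun _ => 0)) ->
    exists k : int, M (pure w k).
Proof.
move=> HL simple hw F_neq0 M HM [f [Mf f_neq0]].
have killed := hw_eventually_killed HL simple hw.
have [s fs] : finsupp f by case: HM => fin _ _ _ _; apply: fin.
have [k0 _ fk0] : exists2 k0, k0 \in s & f k0 != 0.
  apply/hasP; apply: contra_notT f_neq0 => /hasPn f_eq0.
  apply: functional_extensionality => k.
  by have [/f_eq0/negPn/eqP|/fs] := boolP (k \in s).
have h_in := eventually_in_ext (eventually_in_prod_sub HL killed F_neq0 HM
  [seq j <- s | j != k0] (submod_eventually_in HL killed F_neq0 HM Mf))
  (prod_sub_isolate k0 fs).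
case: simple => _ /(_ _ (eventually_in_pure_submod HL killed F_neq0 HM k0)).
case=> [/(_ _ h_in)/eqP | /(_ w) [N HN]].
  rewrite scaler_eq0 (negbTE fk0) orbF (negbTE (prod_sub_neq0 _)) //.
  by rewrite mem_filter eqxx.
exists (k0 + N); apply: submod_ext (HN N (lexx N)) _ => k.
by rewrite /xshift /pure subr_eq.
Qed.
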